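(* Suppose the constraint qualification below holds, let $\{(x^k,y^k,z^k)\}$ be generated by Algorithm G-ADMM-M with parameters $\sigma>0$, $\rho\in(0,2)$, and let $(\bar x,\bar y,\bar z)\in\mathbb{W}^*$. Then for every integer $k>1$, $$\sigma(2-\rho)\|\mathcal{A}^*x^k+\mathcal{B}^*y^k-c\|^2\ \ge\ \sigma(2-\rho)\|\mathcal{A}^*x^{k+1}+\mathcal{B}^*y^k-c\|^2+\frac{(2-\rho)^2}{\rho}\|x^{k+1}-x^k\|^2_{\widehat\Sigma_{f_1}+\mathcal S+\sigma\mathcal{A}\mathcal{A}^*}-(2-\rho)\|\widetilde x^k-x^k\|^2_{\widehat\Sigma_{f_1}+\mathcal S}.$$
   Context: Let $\mathbb{X},\mathbb{Y},\mathbb{Z}$ be finite-dimensional real Euclidean spaces with inner product $\langle\cdot,\cdot\rangle$ and induced norm $\|\cdot\|$. For a self-adjoint positive semidefinite linear operator $\mathcal{G}$, $\|u\|_{\mathcal G}^2:=\langle u,\mathcal G u\rangle$. Let $f_1:\mathbb{X}\to\mathbb{R}$ and $h_1:\mathbb{Y}\to\mathbb{R}$ be convex, continuously differentiable with globally Lipschitz continuous gradients, and $f_2:\mathbb{X}\to(-\infty,+\infty]$, $h_2:\mathbb{Y}\to(-\infty,+\infty]$ closed proper convex. Let $\mathcal{A}:\mathbb{Z}\to\mathbb{X}$, $\mathcal{B}:\mathbb{Z}\to\mathbb{Y}$ be linear with adjoints $\mathcal{A}^*,\mathcal{B}^*$, and $c\in\mathbb{Z}$. The problem is $\min\{f_1(x)+f_2(x)+h_1(y)+h_2(y):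 \mathcal{A}^*x+\mathcal{B}^*y=c\}$. Let $\Sigma_{f_1}\preceq\widehat\Sigma_{f_1}$ be self-adjoint positive semidefinite operators on $\mathbb{X}$ with $\tfrac12\|x-x'\|_{\Sigma_{f_1}}^2\le f_1(x)-f_1(x')-\langle x-x',\nabla f_1(x')\rangle\le\tfrac12\|x-x'\|_{\widehat\Sigma_{f_1}}^2$ for all $x,x'$, and likewise $\Sigma_{h_1}\preceq\widehat\Sigma_{h_1}$ on $\mathbb{Y}$ for $h_1$. Constraint qualification: there exists $(x^0,y^0)\in\operatorname{ri}(\operatorname{dom}f_2\times\operatorname{dom}h_2)$ with $\mathcal{A}^*x^0+\mathcal{B}^*y^0=c$. $\mathbb{W}^*$ denotes the set of $(\bar x,\bar y,\bar z)\in\mathbb{X}\times\mathbb{Y}\times\mathbb{Z}$ with $0\in\partial f_2(\bar x)+\nabla f_1(\bar x)+\mathcal{A}\bar z$, $0\in\partial h_2(\bar y)+\nabla h_1(\bar y)+\mathcal{B}\bar z$, $\mathcal{A}^*\bar x+\mathcal{B}^*\bar y=c$. Algorithm G-ADMM-M: choose $\sigma>0$, $\rho\in(0,2)$, self-adjoint positive semidefinite $\mathcal S$ on $\mathbb{X}$ and $\mathcal T$ on $\mathbb{Y}$ such that $\mathcal F:=\widehat\Sigma_{f_1}+\mathcal S+\sigma\mathcal{A}\mathcal{A}^*\succ0$ and $\mathcal H:=\widehat\Sigma_{h_1}+\mathcal T+\sigma\mathcal{B}\mathcal{B}^*\succ0$, and $\widetilde\omega^0=(\widetilde x^0,\widetilde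 y^0,\widetilde z^0)\in\operatorname{dom}f_2\times\operatorname{dom}h_2\times\mathbb{Z}$. For $k=0,1,2,\dots$: $x^k=\arg\min_x\{f_2(x)+\tfrac12\langle x,\mathcal F x\rangle+\langle\nabla f_1(\widetilde x^k)+\sigma\mathcal{A}(\mathcal{A}^*\widetilde x^k+\mathcal{B}^*\widetilde y^k-c+\sigma^{-1}\widetilde z^k)-\mathcal F\widetilde x^k,x\rangle\}$; $z^k=\widetilde z^k+\sigma(\mathcal{A}^*x^k+\mathcal{B}^*\widetilde y^k-c)$; $y^k=\arg\min_y\{h_2(y)+\tfrac12\langle y,\mathcal H y\rangle+\langle\nabla h_1(\widetilde y^k)+\sigma\mathcal{B}(\mathcal{A}^*x^k+\mathcal{B}^*\widetilde y^k-c+\sigma^{-1}z^k)-\mathcal H\widetilde y^k,y\rangle\}$; $\widetilde\omega^{k+1}=\widetilde\omega^k+\rho(\omega^k-\widetilde\omega^k)$ where $\omega^k=(x^k,y^k,z^k)$, $\widetilde\omega^k=(\widetilde x^k,\widetilde y^k,\widetilde z^k)$. *)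

(* R : realType, Euclidean spaces modelled as column vectors
   'cV[R]_n with the standard inner product; linear maps as matrices;
   extended-valued functions take values in \bar R (mathcomp-analysis). *)
From HB Require Import structures.
From mathcomp Require Import all_boot all_order all_algebra.
From mathcomp Require Import reals constructive_ereal.
Set Implicit Arguments. Unset Strict Implicit. Unset Printing Implicit Defensive.
Import Order.TTheory GRing.Theory Num.Theory.
Local Open Scope ring_scope.

Definition inner {R : realType} {n : nat} (u v : 'cV[R]_n) : R :=
  \sum_(i < n) u i 0 * v i 0.
Definition sqn {R : realType} {n : nat} (u : 'cV[R]_n) : R := inner u u.
Definition enorm {R : realType} {n : nat} (u : 'cV[R]_n) : R := Num.sqrt (sqn u).
Definition qnorm {R : realType} {n : nat} (G : 'M[R]_n) (u : 'cV[R]_n) : R :=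
  inner u (G *m u).

Definition psd {R : realType} {n : nat} (G : 'M[R]_n) : Prop :=
  G^T = G /\ forall u : 'cV[R]_n, 0 <= qnorm G u.
Definition pd {R : realType} {n : nat} (G : 'M[R]_n) : Prop :=
  G^T = G /\ forall u : 'cV[R]_n, u != 0 -> 0 < qnorm G u.

Definition convex_fun {R : realType} {n : nat} (f : 'cV[R]_n -> R) : Prop :=
  forall (x y : 'cV[R]_n) (t : R), 0 < t < 1 ->
    f (t *: x + (1 - t) *: y) <= t * f x + (1 - t) * f y.

Definition has_gradient {R : realType} {n : nat} (f : 'cV[R]_n -> R)
  (g : 'cV[R]_n -> 'cV[R]_n) : Prop :=
  forall (x : 'cV[R]_n) (eps : R), 0 < eps -> exists delta : R, 0 < delta /\
    forall h : 'cV[R]_n, enorm h < delta ->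
      `|f (x + h) - f x - inner (g x) h| <= eps * enorm h.

Definition lipschitz_map {R : realType} {n : nat} (g : 'cV[R]_n -> 'cV[R]_n) : Prop :=
  exists L : R, 0 <= L /\ forall x y, enorm (g x - g y) <= L * enorm (x - y).

Definition smooth_convex {R : realType} {n : nat} (f : 'cV[R]_n -> R)
  (g : 'cV[R]_n -> 'cV[R]_n) : Prop :=
  convex_fun f /\ has_gradient f g /\ lipschitz_map g.

Definition proper_efun {R : realType} {n : nat} (f : 'cV[R]_n -> \bar R) : Prop :=
  (forall x, f x != -oo%E) /\ exists x, f x \is a fin_num.
Definition convex_efun {R : realType} {n : nat} (f : 'cV[R]_n -> \bar R) : Prop :=
  forall (x y : 'cV[R]_n) (t : R), 0 < t < 1 ->
    (f (t *: x + (1 - t) *: y)%R <= t%:E * f x + (1 - t)%R%:E * f y)%E.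
(* closed = lower semicontinuous everywhere *)
Definition closed_efun {R : realType} {n : nat} (f : 'cV[R]_n -> \bar R) : Prop :=
  forall (x : 'cV[R]_n) (a : R), (a%:E < f x)%E ->
    exists e : R, 0 < e /\ forall y, sqn (y - x) < e -> (a%:E < f y)%E.
Definition closed_proper_convex {R : realType} {n : nat}
  (f : 'cV[R]_n -> \bar R) : Prop :=
  closed_efun f /\ proper_efun f /\ convex_efun f.

Definition edom {R : realType} {n : nat} (f : 'cV[R]_n -> \bar R) (x : 'cV[R]_n)
  : Prop := f x \is a fin_num.

Definition subdiff {R : realType} {n : nat} (f : 'cV[R]_n -> \bar R)
  (x v : 'cV[R]_n) : Prop :=
  f x \is a fin_num /\ forall y, (f x + (inner v (y - x))%:E <= f y)%E.

Definition aff_hull {R : realType} {N : nat} (S : 'cV[R]_N -> Prop)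
  (y : 'cV[R]_N) : Prop :=
  exists (k : nat) (P : 'I_k -> 'cV[R]_N) (w : 'I_k -> R),
    (forall i, S (P i)) /\ \sum_(i < k) w i = 1 /\ y = \sum_(i < k) w i *: P i.
Definition rel_int {R : realType} {N : nat} (S : 'cV[R]_N -> Prop)
  (x : 'cV[R]_N) : Prop :=
  S x /\ exists e : R, 0 < e /\
    forall y, aff_hull S y -> sqn (y - x) < e -> S y.

(* constraint qualification: exists (x0,y0) in ri(dom f2 x dom h2) with
   A^* x0 + B^* y0 = c  (X x Y identified with R^(n+m) via col_mx) *)
Definition CQ {R : realType} {n m p : nat} (f2 : 'cV[R]_n -> \bar R)
  (h2 : 'cV[R]_m -> \bar R) (A : 'M[R]_(n, p)) (B : 'M[R]_(m, p))
  (c : 'cV[R]_p) : Prop :=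
  exists (x0 : 'cV[R]_n) (y0 : 'cV[R]_m),
    rel_int (fun u : 'cV[R]_(n + m) => edom f2 (usubmx u) /\ edom h2 (dsubmx u))
            (col_mx x0 y0)
    /\ A^T *m x0 + B^T *m y0 = c.

Definition in_Wstar {R : realType} {n m p : nat}
  (f2 : 'cV[R]_n -> \bar R) (gf1 : 'cV[R]_n -> 'cV[R]_n)
  (h2 : 'cV[R]_m -> \bar R) (gh1 : 'cV[R]_m -> 'cV[R]_m)
  (A : 'M[R]_(n, p)) (B : 'M[R]_(m, p)) (c : 'cV[R]_p)
  (xb : 'cV[R]_n) (yb : 'cV[R]_m) (zb : 'cV[R]_p) : Prop :=
  (exists v, subdiff f2 xb v /\ v + gf1 xb + A *m zb = 0) /\
  (exists w, subdiff h2 yb w /\ w + gh1 yb + B *m zb = 0) /\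
  A^T *m xb + B^T *m yb = c.

Definition is_argmin {R : realType} {n : nat} (phi : 'cV[R]_n -> \bar R)
  (x : 'cV[R]_n) : Prop := forall x', (phi x <= phi x')%E.

Definition GADMM_M {R : realType} {n m p : nat}
  (f2 : 'cV[R]_n -> \bar R) (gf1 : 'cV[R]_n -> 'cV[R]_n)
  (h2 : 'cV[R]_m -> \bar R) (gh1 : 'cV[R]_m -> 'cV[R]_m)
  (A : 'M[R]_(n, p)) (B : 'M[R]_(m, p)) (c : 'cV[R]_p)
  (sigma rho : R) (F : 'M[R]_n) (H : 'M[R]_m)
  (x xt : nat -> 'cV[R]_n) (y yt : nat -> 'cV[R]_m) (z zt : nat -> 'cV[R]_p)
  : Prop :=
  edom f2 (xt 0%N) /\ edom h2 (yt 0%N) /\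
  forall k : nat,
    is_argmin (fun u => f2 u + ((1/2) * inner u (F *m u)
        + inner (gf1 (xt k) + sigma *: (A *m (A^T *m xt k + B^T *m yt k - c
                                              + sigma^-1 *: zt k))
                 - F *m xt k) u)%:E)%E (x k) /\
    z k = zt k + sigma *: (A^T *m x k + B^T *m yt k - c) /\
    is_argmin (fun v => h2 v + ((1/2) * inner v (H *m v)
        + inner (gh1 (yt k) + sigma *: (B *m (A^T *m x k + B^T *m yt k - c
                                              + sigma^-1 *: z k))
                 - H *m yt k) v)%:E)%E (y k) /\
    xt k.+1 = xt k + rho *: (x k - xt k) /\
    yt k.+1 = yt k + rho *: (y k - yt k) /\
    zt k.+1 = zt k + rho *: (z k - zt k).

From HB Require Import structures.
From mathcomp Require Import all_boot all_order all_algebra.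
From mathcomp Require Import reals constructive_ereal.
From mathcomp Require Import ring lra.
Set Implicit Arguments. Unset Strict Implicit. Unset Printing Implicit Defensive.
Import Order.TTheory GRing.Theory Num.Theory.
Local Open Scope ring_scope.

(* Write p_j for the gradient at x^j of the smooth part of the j-th
   x-subproblem.  Optimality puts -p_j in the subdifferential of f2 at x^j, so
   monotonicity of that subdifferential gives <p_{k+1} - p_k, d> <= 0 with
   d = x^{k+1} - x^k.  Unfolding the relaxation step, p_{k+1} - p_k is the
   increment of grad f1 between xt^k and xt^{k+1} plus terms linear in d,
   e = xt^k - x^k and the residual w = A^* x^k + B^* y^k - c.  The gradient
   increment is bounded by comparing the two-sided quadratic bounds of f1 at
   the points xt^{k+1} + (rho/2)(d + e) and xt^k - (rho/2)(d + e), whose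
   difference is rho d.  The resulting inequality between <A^* d, w>,
   ||A^* d||^2, ||d||_G^2 and ||e||_G^2 (G = Shf + S), multiplied by
   2(2 - rho)/rho, is the claim once ||w + A^* d||^2 is expanded. *)

Lemma innerE (R : realType) n (u v : 'cV[R]_n) : inner u v = (u^T *m v) 0 0.
Proof. by rewrite /inner mxE; apply: eq_bigr => i _; rewrite mxE. Qed.

Lemma innerC (R : realType) n (u v : 'cV[R]_n) : inner u v = inner v u.
Proof. by rewrite /inner; apply: eq_bigr => i _; rewrite mulrC. Qed.

Lemma innerDl (R : realType) n (u u' v : 'cV[R]_n) :
  inner (u + u') v = inner u v + inner u' v.
Proof. by rewrite !innerE linearD /= mulmxDl mxE. Qed.

Lemma innerZl (R : realType) n a (u v : 'cV[R]_n) :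
  inner (a *: u) v = a * inner u v.
Proof. by rewrite !innerE linearZ /= -scalemxAl mxE. Qed.

Lemma innerNl (R : realType) n (u v : 'cV[R]_n) : inner (- u) v = - inner u v.
Proof. by rewrite -scaleN1r innerZl mulN1r. Qed.

Lemma innerBl (R : realType) n (u u' v : 'cV[R]_n) :
  inner (u - u') v = inner u v - inner u' v.
Proof. by rewrite innerDl innerNl. Qed.

Lemma innerDr (R : realType) n (u v v' : 'cV[R]_n) :
  inner u (v + v') = inner u v + inner u v'.
Proof. by rewrite innerC innerDl !(innerC _ u). Qed.

Lemma innerZr (R : realType) n a (u v : 'cV[R]_n) :
  inner u (a *: v) = a * inner u v.
Proof. by rewrite innerC innerZl innerC. Qed.

Lemma innerNr (R : realType) n (u v : 'cV[R]_n) : inner u (- v) = - inner u v.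
Proof. by rewrite innerC innerNl innerC. Qed.

Lemma innerBr (R : realType) n (u v v' : 'cV[R]_n) :
  inner u (v - v') = inner u v - inner u v'.
Proof. by rewrite innerDr innerNr. Qed.

Lemma inner_trmx (R : realType) n m (u : 'cV[R]_n) (M : 'M[R]_(n, m)) v :
  inner u (M *m v) = inner (M^T *m u) v.
Proof. by rewrite !innerE mulmxA trmx_mul trmxK. Qed.

Lemma inner_mulmx_sym (R : realType) n (G : 'M[R]_n) u v : G^T = G ->
  inner u (G *m v) = inner v (G *m u).
Proof. by move=> sG; rewrite inner_trmx sG innerC. Qed.

Lemma qnormZ (R : realType) n (G : 'M[R]_n) a u :
  qnorm G (a *: u) = a ^+ 2 * qnorm G u.
Proof. by rewrite /qnorm -scalemxAr innerZl innerZr mulrA expr2. Qed.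

Lemma qnormZl (R : realType) n (G : 'M[R]_n) a u :
  qnorm (a *: G) u = a * qnorm G u.
Proof. by rewrite /qnorm -scalemxAl innerZr. Qed.

Lemma qnormDl (R : realType) n (G H : 'M[R]_n) u :
  qnorm (G + H) u = qnorm G u + qnorm H u.
Proof. by rewrite /qnorm mulmxDl innerDr. Qed.

Lemma qnormDr (R : realType) n (G : 'M[R]_n) u v : G^T = G ->
  qnorm G (u + v) = qnorm G u + 2 * inner v (G *m u) + qnorm G v.
Proof.
move=> sG; rewrite /qnorm mulmxDr !innerDl !innerDr (inner_mulmx_sym _ _ sG); ring.
Qed.

Lemma sqnD (R : realType) n (u v : 'cV[R]_n) :
  sqn (u + v) = sqn u + 2 * inner u v + sqn v.
Proof. by rewrite /sqn !innerDl !innerDr (innerC v u); ring. Qed.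

Lemma qnorm_mul_tr (R : realType) n p (A : 'M[R]_(n, p)) u :
  qnorm (A *m A^T) u = sqn (A^T *m u).
Proof. by rewrite /qnorm -mulmxA inner_trmx. Qed.

Lemma ler_of_forall_addM01 (R : realFieldType) (a b c : R) :
  (forall t, 0 < t < 1 -> a <= b + t * c) -> a <= b.
Proof.
move=> H; rewrite leNgt; apply/negP => hab.
have hD : 0 < `|c| + (a - b) by have := normr_ge0 c; lra.
pose t := (a - b) / (2 * (`|c| + (a - b))).
have ht : t * (2 * (`|c| + (a - b))) = a - b by rewrite /t mulrVK // unitfE; lra.
have hc1 := ler_norm c; have hc2 := normr_ge0 c.
have t0 : 0 < t by nra.
have t1 : t < 1 by nra.
by have := H t; rewrite t0 t1 => /(_ isT); nra.
Qed.

Lemma subdiff_monotone (R : realType) n (f : 'cV[R]_n -> \bar R) (a b u v : 'cV[R]_n) :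
  subdiff f a u -> subdiff f b v -> 0 <= inner (u - v) (a - b).
Proof.
move=> [fa_fin hu] [fb_fin hv]; have := hu b; have := hv a.
case: (f a) fa_fin => [fa||] // _; case: (f b) fb_fin => [fb||] // _.
rewrite -!EFinD !lee_fin innerBl -(opprB a b) innerNr; lra.
Qed.

Lemma argmin_subdiff (R : realType) n (f : 'cV[R]_n -> \bar R) (F : 'M[R]_n)
    (l b : 'cV[R]_n) :
  proper_efun f -> convex_efun f -> F^T = F ->
  is_argmin (fun u => f u + ((1/2) * inner u (F *m u) + inner l u)%:E)%E b ->
  subdiff f b (- (F *m b + l)).
Proof.
move=> [fnoo [x0 x0f]] fcvx sF hmin.
have : f b \is a fin_num.
  have := hmin x0; have := fnoo b; move: x0f.
  by case: (f x0) => // r0 _; case: (f b).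
case hfb : (f b) => [fb||] // _; split=> [|b']; first by rewrite hfb.
case hfb' : (f b') => [fb'||]; last 2 first.
- by rewrite leey.
- by have := fnoo b'; rewrite hfb'.
rewrite hfb -EFinD lee_fin innerNl; set h := b' - b.
(* compare b with b + t h by convexity, divide by t and let t go to 0 *)
apply: (@ler_of_forall_addM01 _ _ _ ((1/2) * inner h (F *m h))) => t /andP[t0 t1].
have hut : t *: b' + (1 - t) *: b = b + t *: h.
  by apply/matrixP => i j; rewrite !mxE; ring.
clearbody h.
have := fcvx b' b t; rewrite t0 t1 hfb hfb' hut -!EFinM -EFinD => /(_ isT) hc.
have := hmin (b + t *: h); rewrite hfb => /le_trans /(_ (leeD2r _ hc)).
rewrite -!EFinD lee_fin mulmxDr -scalemxAr !innerDl !innerDr !innerZl !innerZr.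
rewrite (inner_mulmx_sym b h sF) (innerC (F *m b)) (innerC l) (innerC l h) => hineq.
have : t * (fb - (inner h (F *m b) + inner h l)
             - (fb' + t * (1 / 2 * inner h (F *m h)))) <= 0 by lra.
rewrite pmulr_rle0 //; lra.
Qed.

Lemma grad_diff_bound (R : realType) n (f : 'cV[R]_n -> R)
    (g : 'cV[R]_n -> 'cV[R]_n) (Sh : 'M[R]_n) (a a' t s : 'cV[R]_n) :
  (forall u u', 0 <= f u - f u' - inner (u - u') (g u')) ->
  (forall u u', f u - f u' - inner (u - u') (g u') <= (1/2) * qnorm Sh (u - u')) ->
  inner (t - s) (g a - g a') <=
    (1/2) * qnorm Sh (t - a') + (1/2) * qnorm Sh (s - a).
Proof.
move=> lb ub.
have := ub t a'; have := lb t a; have := ub s a; have := lb s a'.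
rewrite !innerBl !innerBr; lra.
Qed.

Lemma x_step_estimate (R : realType) n p (f : 'cV[R]_n -> R)
    (g : 'cV[R]_n -> 'cV[R]_n) (Sh S : 'M[R]_n) (A : 'M[R]_(n, p)) (sigma rho : R)
    (a a' d e : 'cV[R]_n) (w : 'cV[R]_p) :
  (forall u u', 0 <= f u - f u' - inner (u - u') (g u')) ->
  (forall u u', f u - f u' - inner (u - u') (g u') <= (1/2) * qnorm Sh (u - u')) ->
  psd Sh -> psd S -> 0 < rho -> a' = a - rho *: e ->
  inner (g a' - g a + (Sh + S) *m (d + rho *: e)
         + sigma *: (A *m (A^T *m d + rho *: w))) d <= 0 ->
  sigma * rho * inner (A^T *m d) w + sigma * sqn (A^T *m d)
    + (2 - rho) / 2 * qnorm (Sh + S) d <= rho / 2 * qnorm (Sh + S) e.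
Proof.
move=> lb ub [sSh pSh] [sS pS] rho_gt0 ha' mono.
have sG : (Sh + S)^T = Sh + S by rewrite raddfD /= sSh sS.
have := grad_diff_bound a a' (a' + (rho / 2) *: (d + e)) (a - (rho / 2) *: (d + e)) lb ub.
have -> : a' + (rho / 2) *: (d + e) - (a - (rho / 2) *: (d + e)) = rho *: d.
  by rewrite ha'; apply/matrixP => i j; rewrite !mxE; field.
have -> : a' + (rho / 2) *: (d + e) - a' = (rho / 2) *: (d + e).
  by rewrite addrAC subrr add0r.
have -> : a - (rho / 2) *: (d + e) - a = (- (rho / 2)) *: (d + e).
  by rewrite scaleNr addrAC subrr add0r.
rewrite !qnormZ sqrrN innerZl innerBr => hgrad.
have hSh := pSh (d + e); have hS := pS (d + e).
have hG : qnorm (Sh + S) (d + e) = qnorm Sh (d + e) + qnorm S (d + e) by rewrite qnormDl.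
rewrite qnormDr // in hG.
move: mono; rewrite (mulmxDr (Sh + S)) -scalemxAr !innerDl innerNl !innerZl.
rewrite (innerC (_ *m d)) (innerC (_ *m e)) (inner_mulmx_sym d e sG).
rewrite (innerC (A *m _)) (inner_trmx d A) innerDr innerZr (innerC (g a')) (innerC (g a)).
rewrite /qnorm /sqn in hgrad hG hSh hS *.
nra.
Qed.

Lemma residual_decrease (R : realType) n p (G : 'M[R]_n) (A : 'M[R]_(n, p))
    (sigma rho : R) (d e : 'cV[R]_n) (w : 'cV[R]_p) :
  0 < rho < 2 ->
  sigma * rho * inner (A^T *m d) w + sigma * sqn (A^T *m d)
    + (2 - rho) / 2 * qnorm G d <= rho / 2 * qnorm G e ->
  sigma * (2 - rho) * sqn (w + A^T *m d)
    + (2 - rho) ^+ 2 / rho * qnorm (G + sigma *: (A *m A^T)) d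
    - (2 - rho) * qnorm G e <= sigma * (2 - rho) * sqn w.
Proof.
move=> /andP[rho_gt0 rho_lt2] key.
rewrite sqnD qnormDl qnormZl qnorm_mul_tr (innerC w).
set X := inner _ w in key *; set Y := sqn _ in key *.
set D := qnorm G d in key *; set E := qnorm G e in key *.
have -> : sigma * (2 - rho) * (sqn w + 2 * X + Y) + (2 - rho) ^+ 2 / rho * (D + sigma * Y)
    - (2 - rho) * E
  = sigma * (2 - rho) * sqn w + (2 - rho) * (2 / rho)
      * (sigma * rho * X + sigma * Y + (2 - rho) / 2 * D - rho / 2 * E).
  by field; rewrite gt_eqF.
rewrite gerDl; apply: mulr_ge0_le0; last by lra.
by apply: mulr_ge0; [lra | rewrite divr_ge0 // ltW].
Qed.

Section XSubproblem.
Variables (R : realType) (n m p : nat) (A : 'M[R]_(n, p)) (B : 'M[R]_(m, p))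
  (c : 'cV[R]_p) (G : 'M[R]_n) (sigma rho : R) (gf1 : 'cV[R]_n -> 'cV[R]_n)
  (x xt : nat -> 'cV[R]_n) (y yt : nat -> 'cV[R]_m) (z zt : nat -> 'cV[R]_p).

(* The p_j above: the gradient at x^j of the smooth part of the j-th
   x-subproblem. *)
Definition xsub_grad (j : nat) : 'cV[R]_n :=
  let F := G + sigma *: (A *m A^T) in
  F *m x j + (gf1 (xt j) + sigma *: (A *m (A^T *m xt j + B^T *m yt j - c
                                            + sigma^-1 *: zt j)) - F *m xt j).

Variable k : nat.
Hypotheses (sigma_neq0 : sigma != 0)
  (zE : z k = zt k + sigma *: (A^T *m x k + B^T *m yt k - c))
  (xtE : xt k.+1 = xt k + rho *: (x k - xt k))
  (ytE : yt k.+1 = yt k + rho *: (y k - yt k))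
  (ztE : zt k.+1 = zt k + rho *: (z k - zt k)).

Lemma xsub_grad_succ : xsub_grad k.+1 - xsub_grad k =
  gf1 (xt k.+1) - gf1 (xt k) + G *m (x k.+1 - x k + rho *: (xt k - x k))
  + sigma *: (A *m (A^T *m (x k.+1 - x k) + rho *: (A^T *m x k + B^T *m y k - c))).
Proof.
rewrite /xsub_grad ztE zE ytE; set g1 := gf1 (xt k.+1); rewrite xtE.
do ![rewrite mulmxDr | rewrite mulmxDl | rewrite mulmxN | rewrite mulNmx
    | rewrite -scalemxAr | rewrite -scalemxAl | rewrite -mulmxA].
by apply/matrixP => i j; rewrite !mxE; field.
Qed.

End XSubproblem.

Theorem lemma6 (R : realType) (n m p : nat)
  (f1 : 'cV[R]_n -> R) (gf1 : 'cV[R]_n -> 'cV[R]_n) (f2 : 'cV[R]_n -> \bar R)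
  (h1 : 'cV[R]_m -> R) (gh1 : 'cV[R]_m -> 'cV[R]_m) (h2 : 'cV[R]_m -> \bar R)
  (A : 'M[R]_(n, p)) (B : 'M[R]_(m, p)) (c : 'cV[R]_p)
  (Sf Shf : 'M[R]_n) (Sh Shh : 'M[R]_m)
  (S : 'M[R]_n) (T : 'M[R]_m) (sigma rho : R)
  (x xt : nat -> 'cV[R]_n) (y yt : nat -> 'cV[R]_m) (z zt : nat -> 'cV[R]_p)
  (xb : 'cV[R]_n) (yb : 'cV[R]_m) (zb : 'cV[R]_p) :
  smooth_convex f1 gf1 -> smooth_convex h1 gh1 ->
  closed_proper_convex f2 -> closed_proper_convex h2 ->
  psd Sf -> psd Shf -> psd (Shf - Sf) ->
  psd Sh -> psd Shh -> psd (Shh - Sh) ->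
  (forall u u' : 'cV[R]_n,
     (1/2) * qnorm Sf (u - u') <= f1 u - f1 u' - inner (u - u') (gf1 u') /\
     f1 u - f1 u' - inner (u - u') (gf1 u') <= (1/2) * qnorm Shf (u - u')) ->
  (forall v v' : 'cV[R]_m,
     (1/2) * qnorm Sh (v - v') <= h1 v - h1 v' - inner (v - v') (gh1 v') /\
     h1 v - h1 v' - inner (v - v') (gh1 v') <= (1/2) * qnorm Shh (v - v')) ->
  CQ f2 h2 A B c ->
  0 < sigma -> 0 < rho < 2 ->
  psd S -> psd T ->
  pd (Shf + S + sigma *: (A *m A^T)) -> pd (Shh + T + sigma *: (B *m B^T)) ->
  GADMM_M f2 gf1 h2 gh1 A B c sigma rho
    (Shf + S + sigma *: (A *m A^T)) (Shh + T + sigma *: (B *m B^T))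
    x xt y yt z zt ->
  in_Wstar f2 gf1 h2 gh1 A B c xb yb zb ->
  forall k : nat, (1 < k)%N ->
    sigma * (2 - rho) * sqn (A^T *m x k + B^T *m y k - c) >=
      sigma * (2 - rho) * sqn (A^T *m x k.+1 + B^T *m y k - c)
      + (2 - rho) ^+ 2 / rho * qnorm (Shf + S + sigma *: (A *m A^T)) (x k.+1 - x k)
      - (2 - rho) * qnorm (Shf + S) (xt k - x k).
Proof.
move=> _ _ [_ [pf2 cvxf2]] _ [_ pSf] pShf _ _ _ _ f1_bounds _ _ sigma_gt0 rho_range
  pS _ [sF _] _ [_ [_ iter]] _ k _.
have [xk [zk [_ [xtE [ytE ztE]]]]] := iter k.
have [xk1 _] := iter k.+1.
have mono := subdiff_monotone (argmin_subdiff pf2 cvxf2 sF xk1)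
                              (argmin_subdiff pf2 cvxf2 sF xk).
rewrite opprK addrC -opprB innerNl oppr_ge0 in mono.
have := xsub_grad_succ (Shf + S) gf1 (lt0r_neq0 sigma_gt0) zk xtE ytE ztE.
rewrite /xsub_grad /= => step; rewrite step in mono.
have f1_convex u u' : 0 <= f1 u - f1 u' - inner (u - u') (gf1 u').
  apply: le_trans _ (f1_bounds u u').1.
  by apply: mulr_ge0; [rewrite divr_ge0 | apply: pSf].
have f1_smooth u u' := (f1_bounds u u').2.
have xtE' : xt k.+1 = xt k - rho *: (xt k - x k) by rewrite xtE -scalerN opprB.
have key := x_step_estimate f1_convex f1_smooth pShf pS (andP rho_range).1 xtE' mono.
have -> : A^T *m x k.+1 + B^T *m y k - c
        = A^T *m x k + B^T *m y k - c + A^T *m (x k.+1 - x k).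
  by rewrite mulmxBr; apply/matrixP => i j; rewrite !mxE; ring.
exact: residual_decrease rho_range key.
Qed.
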